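(* Let $\mathcal{H}$ be a tree-to-tree Hennie machine (THM) with input ranked alphabet $\Sigma$ and output ranked alphabet $\Gamma$. Then $[\![\mathcal{H}]\!]$ has linear size-to-height increase: there exist constants $c,d$ such that for every $t\in T_\Sigma$ in the domain of $[\![\mathcal{H}]\!]$, $\mathrm{height}([\![\mathcal{H}]\!](t))\le c\,|t|+d$.
   Context: A ranked alphabet is a finite set $\Sigma$ with a map $\mathrm{rank}:\Sigma\to\mathbb{N}$; $\max\mathrm{rank}(\Sigma)$ is the maximal rank. A tree over $\Sigma$ is a finite ordered tree with nodes labeled in $\Sigma$ such that a node labeled $\sigma$ has exactly $\mathrm{rank}(\sigma)$ children; nodes are words over positive integers: the root is $\varepsilon$, the $i$-th child of $u$ is $ui$, and $u{\uparrow}$ denotes the parent of $u\neq\varepsilon$. $T_\Sigma$ is the set of trees over $\Sigma$; for a set $Y$ disjoint from $\Sigma$, $T_\Sigma[Y]$ is the set of trees over $\Sigma\cup Y$ where elements of $Y$ have rank $0$. $|t|$ is the number of nodes of $t$ and $\mathrm{height}(t)$ the maximal number of edges on a root-to-leaf path. An unrestricted tree-to-tree Hennie machine (uTHM) is a tuple $\mathcal{H}=(Q,M,\top,\Sigma,\Gamma,q_{init},\delta)$ where $Q$ is a finite set of states, $M$ a finite set of memory symbols, $\top\in M$, $\Sigma,\Gamma$ ranked alphabets (input/output), $q_{init}\in Q$, and $\delta:Q\times\Sigma\times M\rightharpoonup T_\Gamma[Q\times M\times D]$ is a partial function, $D=\{\uparrow\}\cup\{1,\dots,\max\mathrm{rank}(\Sigma)\}$,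 such that every leaf label $(q',m',d)$ of $\delta(q,\sigma,m)$ has $d\in\{\uparrow,1,\dots,\mathrm{rank}(\sigma)\}$. On an input $t\in T_\Sigma$, a configuration is a triple $(u,q,\mu)$ with $u$ a node of $t$, $q\in Q$, $\mu$ a map from nodes of $t$ to $M$; the initial configuration is $(\varepsilon,q_{init},\mu_\top)$ with $\mu_\top$ constantly $\top$. For a configuration $(u,q,\mu)$ and $(q',m',d)\in Q\times M\times D$, the successor is $(ud,q',\mu')$ where $\mu'(u)=m'$, $\mu'=\mu$ elsewhere, and $ud$ is the parent of $u$ if $d=\uparrow$ and the $d$-th child otherwise (undefined if that node does not exist). The step of a configuration $(u,q,\mu)$ is the tree obtained from $\delta(q,\mathrm{lab}_t(u),\mu(u))$ by replacing every leaf $(q',m',d)$ by the corresponding successor configuration (undefined if $\delta$ or a successor is undefined). Starting from the initial configuration and repeatedly replacing configuration-labeled leaves by their steps is a confluent rewriting; $[\![\mathcal{H}]\!](t)$ is the unique tree of $T_\Gamma$ so reached, if it exists, and is undefined otherwise. A branch-outputting run on $t$ is a sequence of configurations $C_0,\dots,C_n$ with $C_0$ initial and each $C_{i+1}$ a leaf label of the step of $C_i$. Its number of visits at a set $S$ of nodes is the number of $i$ such that the position of $C_i$ lies in $S$. $\mathcal{H}$ is a tree-to-tree Hennie machine (THM) if there is $N$ such that for every $t\in T_\Sigma$, every node $u$ of $t$ and every branch-outputting run on $t$, the number of visits at $\{u\}$ is at most $N$. *)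

From HB Require Import structures.
From mathcomp Require Import all_boot.
Set Implicit Arguments. Unset Strict Implicit. Unset Printing Implicit Defensive.

(* Finite ordered trees with labels in A (rank constraints are imposed by
   separate well-formedness predicates). *)
Inductive tree (A : Type) : Type := Node of A & seq (tree A).
Arguments Node {A} _ _.

Definition children {A} (t : tree A) : seq (tree A) := let: Node _ ts := t in ts.
Definition root_label {A} (t : tree A) : A := let: Node a _ := t in a.

Fixpoint tree_size {A} (t : tree A) : nat :=
  let: Node _ ts := t in (sumn (map tree_size ts)).+1.

Fixpoint height {A} (t : tree A) : nat :=
  let: Node _ ts := t in
  if ts is [::] then 0 else (foldr maxn 0 (map height ts)).+1.

Fixpoint wf {A} (rk : A -> nat) (t : tree A) : bool :=
  let: Node a ts := t in (size ts == rk a) && all (wf rk) ts.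

(* Nodes are words over positive integers; [::] is the root, rcons u i is
   the i-th child (1-based) of u. subtree t u = Some (subtree at u) if u is
   a node of t, None otherwise. *)
Fixpoint subtree {A} (t : tree A) (u : seq nat) {struct u} : option (tree A) :=
  match u with
  | [::] => Some t
  | i :: u' =>
      if 0 < i then
        match onth (children t) i.-1 with
        | Some t' => subtree t' u'
        | None => None
        end
      else None
  end.

Definition is_node {A} (t : tree A) (u : seq nat) : Prop := subtree t u <> None.

Definition lab {A} (t : tree A) (u : seq nat) : option A :=
  omap root_label (subtree t u).

(* Directions D = {up} u {1,...,maxrank}: None = up, Some i = i-th child. *)
Definition dir := option nat.

(* Well-formedness of an element of T_Gamma[Q x M x D] appearing as
   delta(q, sigma, m) with rank sigma = r: Gamma-symbols respect their rank,
   (q',m',d) symbols are leaves, and d is up or in {1,...,r}. *)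
Fixpoint out_wf {G X : Type} (rkG : G -> nat) (r : nat) (s : tree (G + (X * dir)))
  : bool :=
  let: Node a ts := s in
  match a with
  | inl g => (size ts == rkG g) && all (out_wf rkG r) ts
  | inr (_, d) =>
      nilp ts && (if d is Some i then (0 < i) && (i <= r) else true)
  end.

Fixpoint cleaves {G X : Type} (s : tree (G + X)) : seq X :=
  let: Node a ts := s in
  match a with
  | inr x => [:: x]
  | inl _ => flatten (map cleaves ts)
  end.

Record uTHM (Sigma Gamma : finType) (rkS : Sigma -> nat) (rkG : Gamma -> nat) := {
  hQ : finType;
  hM : finType;
  htop : hM;
  hqinit : hQ;
  hdelta : hQ -> Sigma -> hM -> option (tree (Gamma + (hQ * hM * dir)));
  hdelta_wf : forall q s m o, hdelta q s m = Some o -> out_wf rkG (rkS s) o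
}.

Arguments hQ {Sigma Gamma rkS rkG} _.
Arguments hM {Sigma Gamma rkS rkG} _.
Arguments htop {Sigma Gamma rkS rkG} _.
Arguments hqinit {Sigma Gamma rkS rkG} _.
Arguments hdelta {Sigma Gamma rkS rkG} _ _ _ _.

Section Semantics.
Variables (Sigma Gamma : finType) (rkS : Sigma -> nat) (rkG : Gamma -> nat).
Variable H : uTHM rkS rkG.

Record config := Config {
  cpos : seq nat;
  cstate : hQ H;
  cmem : seq nat -> hM H
}.

Definition init_config : config := Config [::] (hqinit H) (fun _ => htop H).

Variable t : tree Sigma.

Definition succ (C : config) (x : hQ H * hM H * dir) : option config :=
  let: (q', m', d) := x in
  let u := cpos C in
  let mu' := fun w => if w == u then m' else cmem C w in
  match d with
  | None => if u is [::] then None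
            else Some (Config (take (size u).-1 u) q' mu')
  | Some i => if subtree t (rcons u i) is Some _
              then Some (Config (rcons u i) q' mu') else None
  end.

Definition delta_at (C : config) : option (tree (Gamma + (hQ H * hM H * dir))) :=
  match lab t (cpos C) with
  | Some sg => hdelta H (cstate C) sg (cmem C (cpos C))
  | None => None
  end.

(* evalC C o : rewriting starting from configuration C terminates in the
   output tree o in T_Gamma (least fixed point = finite rewriting). *)
Inductive evalC : config -> tree Gamma -> Prop :=
| EvC C s o : delta_at C = Some s -> evalT C s o -> evalC C o
with evalT : config -> tree (Gamma + (hQ H * hM H * dir)) -> tree Gamma -> Prop :=
| EvNode C g ts os : evalL C ts os -> evalT C (Node (inl g) ts) (Node g os)
| EvLeaf C x C' o : succ C x = Some C' -> evalC C' o ->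
    evalT C (Node (inr x) [::]) o
with evalL : config -> seq (tree (Gamma + (hQ H * hM H * dir))) -> seq (tree Gamma) -> Prop :=
| EvNil C : evalL C [::] [::]
| EvCons C s ss o os : evalT C s o -> evalL C ss os -> evalL C (s :: ss) (o :: os).

Definition sem (o : tree Gamma) : Prop := evalC init_config o.

Definition step_leaf (C C' : config) : Prop :=
  exists s, delta_at C = Some s /\
    (forall x, x \in cleaves s -> succ C x <> None) /\
    exists2 x, x \in cleaves s & succ C x = Some C'.

Definition branch_run (n : nat) (run : nat -> config) : Prop :=
  run 0 = init_config /\ forall i, i < n -> step_leaf (run i) (run i.+1).

Definition visits (n : nat) (run : nat -> config) (u : seq nat) : nat :=
  count (fun i => cpos (run i) == u) (iota 0 n.+1).

End Semantics.

Definition isTHM (Sigma Gamma : finType) (rkS : Sigma -> nat) (rkG : Gamma -> nat)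
  (H : uTHM rkS rkG) : Prop :=
  exists N : nat, forall t : tree Sigma, wf rkS t ->
    forall u, is_node t u ->
    forall (n : nat) (run : nat -> config H),
      branch_run t n run -> visits n run u <= N.

From mathcomp Require Import all_boot.
Set Implicit Arguments. Unset Strict Implicit. Unset Printing Implicit Defensive.

(* Follow a tallest branch of the output back through the rewriting. Every
   rewriting step on it contributes at most K + 1 edges, K being the maximal
   height of a right-hand side of delta, and the configurations met along the
   branch form a branch-outputting run. In a THM such a run visits each of
   the |t| nodes of the input at most N times, so it has at most N |t|
   configurations, and the output has height at most (K + 1) N |t|. *)

Section Nodes.
Variable A : Type.

(* The nodes of the forest [ts] whose first tree is numbered [k]; [f] is
   [nodes] itself, passed as an argument to keep the recursion structural. *)
Fixpoint forest_nodes (f : tree A -> seq (seq nat)) (k : nat) (ts : seq (tree A))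
    : seq (seq nat) :=
  if ts is t :: ts' then map (cons k) (f t) ++ forest_nodes f k.+1 ts' else [::].

Fixpoint nodes (t : tree A) : seq (seq nat) :=
  let: Node _ ts := t in [::] :: forest_nodes nodes 1 ts.

Lemma size_nodes (t : tree A) : size (nodes t) = tree_size t.
Proof.
move: t; fix IH 1 => -[a ts] /=; congr S.
move: 1; elim: ts => [|t ts IHts] k //=.
by rewrite size_cat size_map IH IHts.
Qed.

Lemma mem_forest_nodes (f : tree A -> seq (seq nat)) k ts j t u :
  onth ts j = Some t -> u \in f t -> (k + j) :: u \in forest_nodes f k ts.
Proof.
elim: ts k j => [|s ts IH] k [|j] //=.
- by case=> -> u_ft; rewrite addn0 mem_cat map_f.
- by move=> ts_j u_ft; rewrite mem_cat -addSnnS IH ?orbT.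
Qed.

Lemma mem_nodes (t : tree A) u : is_node t u -> u \in nodes t.
Proof.
elim: u t => [|[|i] u IH] [a ts]; rewrite /is_node //=.
case ts_i: (onth ts i) => [t|] // u_t.
by rewrite in_cons -add1n (mem_forest_nodes 1 ts_i) ?IH ?orbT.
Qed.

Lemma subtree_cat (t : tree A) u v :
  subtree t (u ++ v) = obind (subtree^~ v) (subtree t u).
Proof.
elim: u t => [|i u IH] t //=.
by case: (0 < i) => //; case: onth.
Qed.

End Nodes.

Lemma size_le_mul_undup (T : eqType) (s : seq T) N :
  {in s, forall x, count_mem x s <= N} -> size s <= N * size (undup s).
Proof.
move=> count_le.
rewrite -(perm_size (perm_count_undup s)) size_flatten /shape -map_comp sumnE big_map.
apply: (@leq_trans (\sum_(x <- undup s) N)).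
  rewrite big_seq [X in _ <= X]big_seq; apply: leq_sum => x.
  by rewrite mem_undup /= size_nseq; apply: count_le.
by rewrite big_const_seq count_predT iter_addn_0 mulnC.
Qed.

Definition max_height (A : Type) (ts : seq (tree A)) : nat :=
  foldr maxn 0 (map height ts).

Lemma height_Node_le (A : Type) (a : A) ts : height (Node a ts) <= (max_height ts).+1.
Proof. by case: ts. Qed.

Section Runs.
Variables (Sigma Gamma : finType) (rkS : Sigma -> nat) (rkG : Gamma -> nat).
Variables (H : uTHM rkS rkG) (t : tree Sigma).

Lemma is_node_succ (C C' : config H) x :
  is_node t (cpos C) -> succ t C x = Some C' -> is_node t (cpos C').
Proof.
case: x => [[q m] [i|]] /=.
  by case t_ui: subtree => // _ [<-]; rewrite /is_node t_ui.
case: C => [[|b u] q0 mu] //= + [<-] /=.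
rewrite (lastI b u) -cats1 take_size_cat ?size_belast // /is_node subtree_cat.
by case: subtree.
Qed.

Definition chain (L : nat) (r : nat -> config H) : Prop :=
  forall i, i < L -> step_leaf t (r i) (r i.+1).

Definition run_from (C : config H) (L : nat) : Prop :=
  exists2 r, r 0 = C & chain L r.

Lemma run_from_step C C' L : step_leaf t C C' -> run_from C' L -> run_from C L.+1.
Proof.
move=> CC' [r r0 r_chain].
exists (fun i => if i is j.+1 then r j else C) => // -[|i] /= lt_iL; last exact: r_chain.
by rewrite r0.
Qed.

Lemma branch_run_is_node n (run : nat -> config H) :
  branch_run t n run -> forall i, i <= n -> is_node t (cpos (run i)).
Proof.
move=> [run0 run_step]; elim=> [|i IH] le_in; first by rewrite run0.
have [_ [_ [_ [x _ succ_x]]]] := run_step i le_in.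
exact: is_node_succ (IH (ltnW le_in)) succ_x.
Qed.

Section HennieBound.
Variable N : nat.
Hypothesis visits_le : forall u, is_node t u ->
  forall n (run : nat -> config H), branch_run t n run -> visits n run u <= N.

Lemma branch_run_length n (run : nat -> config H) :
  branch_run t n run -> n.+1 <= N * tree_size t.
Proof.
move=> brun; set pos := [seq cpos (run i) | i <- iota 0 n.+1].
have pos_node u : u \in pos -> is_node t u.
  case/mapP=> i; rewrite mem_iota ltnS => /andP[_ le_in] ->.
  exact: branch_run_is_node brun _ le_in.
have -> : n.+1 = size pos by rewrite size_map size_iota.
apply: leq_trans (size_le_mul_undup _) _.
  by move=> u /pos_node node_u; rewrite count_map; apply: visits_le node_u _ _ brun.
rewrite leq_mul2l -size_nodes uniq_leq_size ?undup_uniq ?orbT // => u.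
by rewrite mem_undup => /pos_node; apply: mem_nodes.
Qed.

End HennieBound.

Definition step_height_bound : nat :=
  \max_(x : hQ H * Sigma * hM H)
     if hdelta H x.1.1 x.1.2 x.2 is Some s then height s else 0.

Local Notation K := step_height_bound.

Lemma height_delta_at (C : config H) s : delta_at t C = Some s -> height s <= K.
Proof.
rewrite /delta_at; case: lab => // sg delta_s.
by apply: leq_trans (leq_bigmax (cstate C, sg, cmem C (cpos C))); rewrite /= delta_s.
Qed.

Definition succ_defined (C : config H) (X : seq (hQ H * hM H * dir)) : Prop :=
  forall x, x \in X -> succ t C x <> None.

(* Invariant of the evaluation of a step tree of height [h] with leaves [X] at
   [C] into an output of height [v]: either the step tree alone accounts for
   [v], or the excess is accounted for by a run through one of the leaves. *)
Definition leaf_run_bound (C : config H) (X : seq (hQ H * hM H * dir)) (h v : nat) :=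
  v <= h \/ exists x C' L,
    [/\ x \in X, succ t C x = Some C', run_from C' L & v <= h + K.+1 * L.+1].

Lemma leaf_run_bound_mono C X X' h h' v v' :
  {subset X <= X'} -> h <= h' -> v' <= v ->
  leaf_run_bound C X h v -> leaf_run_bound C X' h' v'.
Proof.
move=> sub_X le_h le_v [le_vh|[x [C' [L [Xx succ_x run_C' le_vL]]]]].
  by left; rewrite (leq_trans le_v) ?(leq_trans le_vh).
right; exists x, C', L; split; rewrite ?sub_X //.
by rewrite (leq_trans le_v) ?(leq_trans le_vL) ?leq_add2r.
Qed.

Lemma leaf_run_boundS C X h v :
  leaf_run_bound C X h v -> leaf_run_bound C X h.+1 v.+1.
Proof. by case=> [|[x [C' [L []]]]]; [left | right; exists x, C', L]. Qed.

Lemma leaf_run_bound_cat C X Y h h' v v' :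
  leaf_run_bound C X h v -> leaf_run_bound C Y h' v' ->
  leaf_run_bound C (X ++ Y) (maxn h h') (maxn v v').
Proof.
move=> bound_X bound_Y; have [le_vv'|lt_v'v] := leqP v v'.
  apply: leaf_run_bound_mono bound_Y; rewrite ?leq_maxr ?geq_max ?le_vv' //.
  by move=> y Yy; rewrite mem_cat Yy orbT.
apply: leaf_run_bound_mono bound_X; rewrite ?leq_maxl ?geq_max ?leqnn ?ltnW //.
by move=> x Xx; rewrite mem_cat Xx.
Qed.

Lemma run_from_delta_at C s v :
  delta_at t C = Some s -> succ_defined C (cleaves s) ->
  leaf_run_bound C (cleaves s) (height s) v ->
  exists2 L, run_from C L & v <= K.+1 * L.+1.
Proof.
move=> delta_s defined [le_vh|[x [C' [L [Xx succ_x run_C' le_vL]]]]].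
  exists 0; first by exists (fun=> C).
  by rewrite muln1 (leq_trans le_vh) ?leqW ?(height_delta_at delta_s).
exists L.+1.
  by apply: run_from_step run_C'; exists s; split=> //; split=> //; exists x.
by rewrite mulnS (leq_trans le_vL) ?leq_add2r ?leqW ?(height_delta_at delta_s).
Qed.

Lemma evalL_size (C : config H) ts os : evalL t C ts os -> size ts = size os.
Proof. by elim=> //= *; congr S. Qed.

Scheme evalC_mind := Induction for evalC Sort Prop
with evalT_mind := Induction for evalT Sort Prop
with evalL_mind := Induction for evalL Sort Prop.

Lemma evalC_run (C : config H) o :
  evalC t C o -> exists2 L, run_from C L & height o <= K.+1 * L.+1.
Proof.
apply: (evalC_mind
  (P := fun C o _ => exists2 L, run_from C L & height o <= K.+1 * L.+1)
  (P0 := fun C s o _ => succ_defined C (cleaves s) /\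
     leaf_run_bound C (cleaves s) (height s) (height o))
  (P1 := fun C ss os _ => succ_defined C (flatten (map cleaves ss)) /\
     leaf_run_bound C (flatten (map cleaves ss)) (max_height ss) (max_height os))).
- by move=> {}C s {}o delta_s _ [defined bound]; apply: run_from_delta_at bound.
- move=> {}C g ts os ev_ts [defined bound]; split=> //.
  case: ts ev_ts defined bound => [|s ss] ev_ts _ bound.
    by rewrite (size0nil (esym (evalL_size ev_ts))); left.
  exact: leaf_run_bound_mono _ _ (height_Node_le _ _) (leaf_run_boundS bound).
- move=> {}C x C' {}o succ_x _ [L run_C' le_oL]; split.
    by move=> y; rewrite inE => /eqP ->; rewrite succ_x.
  by right; exists x, C', L; rewrite mem_head.
- by split=> //; left.
- move=> {}C s ss {}o os _ [defined_s bound_s] _ [defined_ss bound_ss]; split.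
    by move=> x; rewrite mem_cat => /orP[/defined_s|/defined_ss].
  exact: leaf_run_bound_cat bound_s bound_ss.
Qed.

End Runs.

Theorem mainTheorem1 (Sigma Gamma : finType) (rkS : Sigma -> nat) (rkG : Gamma -> nat)
  (H : uTHM rkS rkG) :
  isTHM H ->
  exists c d : nat, forall t : tree Sigma, wf rkS t ->
    forall o : tree Gamma, sem H t o -> height o <= c * tree_size t + d.
Proof.
move=> [N visits_le]; exists ((step_height_bound H).+1 * N), 0 => t wf_t o sem_o.
have [L [r r0 r_chain] le_oL] := evalC_run sem_o.
have L_le : L.+1 <= N * tree_size t.
  by apply: (branch_run_length (visits_le t wf_t) (run := r)); split.
by rewrite addn0 -mulnA (leq_trans le_oL) // leq_mul2l L_le orbT.
Qed.
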